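(* Let $p\in(1,2)$. There exists a constant $C_p>0$ such that for all real numbers $a,b$ and every $\mu\in(0,1)$ with $|a-b|\ge\mu\max(|a|,|b|)$, $G(a-b)\le\frac{C_p}{\mu^{2-p}}(a-b)\big(g(a)-g(b)\big).$
   Context: $g(y)=\operatorname{sgn}(y)[(|y|+1)^{p-1}-1]$ and $G(y)=\int_0^yg(s)\,ds=\frac1p[(|y|+1)^p-1]-|y|$. *)

From Stdlib Require Import Reals.
Open Scope R_scope.

Definition sgn (y : R) : R :=
  if Rlt_dec 0 y then 1 else if Rlt_dec y 0 then -1 else 0.

Definition g (p y : R) : R :=
  sgn y * (Rpower (Rabs y + 1) (p - 1) - 1).

Definition G (p y : R) : R :=
  / p * (Rpower (Rabs y + 1) p - 1) - Rabs y.

From Stdlib Require Import Reals Lra.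
Open Scope R_scope.

(* Write M = max(|a|,|b|), d = a - b, and take C_p = 1/(p-1).
   1. On each half-line g is (up to sign) t |-> (t+1)^(p-1) - 1, whose slope
      (p-1)(t+1)^(p-2) is at least (p-1)(M+1)^(p-2) on [0,M]; hence
        (p-1)(M+1)^(p-2) d^2 <= d (g a - g b).
   2. By convexity of u |-> u^p,  G(d) <= d^2 (|d|+1)^(p-2).
   3. The hypothesis |d| >= mu M gives mu (M+1) <= |d| + 1, and since the
      exponent p-2 is negative, mu^(2-p) (|d|+1)^(p-2) <= (M+1)^(p-2).
   Chaining 2, 3 and 1 gives G(d) <= mu^(p-2)/(p-1) * d (g a - g b). *)

Lemma Rpower_antitone c x y : c <= 0 -> 0 < x <= y -> Rpower y c <= Rpower x c.
Proof.
  intros Hc Hxy.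
  replace c with (- (- c)) by ring.
  rewrite !(Rpower_Ropp _ (- c)).
  apply Rinv_le_contravar; [apply exp_pos | apply Rle_Rpower_l; lra].
Qed.

Lemma Rpower_base_1 c : Rpower 1 c = 1.
Proof. unfold Rpower. rewrite ln_1, Rmult_0_r. apply exp_0. Qed.

Lemma Rpower_mean_value r X Y : 0 < Y < X ->
  exists c, Y < c < X /\ Rpower X r - Rpower Y r = r * Rpower c (r - 1) * (X - Y).
Proof.
  intros HYX.
  destruct (MVT_cor2 (fun x => Rpower x r) (fun x => r * Rpower x (r - 1)) Y X)
    as [c [Hc Hmid]]; [lra | |].
  - intros c Hc. apply derivable_pt_lim_power. lra.
  - exists c. split; [lra | exact Hc].
Qed.

Lemma concave_Rpower_increment q X Y : 0 <= q <= 1 -> 0 < Y <= X ->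
  q * Rpower X (q - 1) * (X - Y) <= Rpower X q - Rpower Y q.
Proof.
  intros Hq HYX.
  destruct (Rle_lt_or_eq_dec Y X (proj2 HYX)) as [Hlt | <-]; [| lra].
  destruct (Rpower_mean_value q X Y ltac:(lra)) as [c [Hc ->]].
  assert (Hslope : Rpower X (q - 1) <= Rpower c (q - 1))
    by (apply Rpower_antitone; lra).
  assert (Hlen : 0 <= q * (X - Y)) by (apply Rmult_le_pos; lra).
  nra.
Qed.

Lemma convex_Rpower_increment r X Y : 1 <= r -> 0 < Y <= X ->
  Rpower X r - Rpower Y r <= r * Rpower X (r - 1) * (X - Y).
Proof.
  intros Hr HYX.
  destruct (Rle_lt_or_eq_dec Y X (proj2 HYX)) as [Hlt | <-]; [| lra].
  destruct (Rpower_mean_value r X Y ltac:(lra)) as [c [Hc ->]].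
  assert (Hslope : Rpower c (r - 1) <= Rpower X (r - 1))
    by (apply Rle_Rpower_l; lra).
  assert (Hlen : 0 <= r * (X - Y)) by (apply Rmult_le_pos; lra).
  nra.
Qed.

Lemma Rpower_rescale c mu x y : c <= 0 -> 0 < mu -> 0 < y -> mu * y <= x ->
  Rpower mu (- c) * Rpower x c <= Rpower y c.
Proof.
  intros Hc Hmu Hy Hyx.
  assert (Hscale : Rpower mu (- c) = Rpower (/ mu) c).
  { unfold Rpower. rewrite ln_Rinv by exact Hmu. f_equal. ring. }
  rewrite Hscale, Rpower_mult_distr by (try apply Rinv_0_lt_compat; nra).
  apply Rpower_antitone; [exact Hc |]. split; [exact Hy |].
  apply Rmult_le_reg_l with mu; [exact Hmu |].
  rewrite <- Rmult_assoc, Rinv_r, Rmult_1_l by lra. exact Hyx.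
Qed.

Section Profile.

Variable p : R.
Hypothesis hp : 1 < p < 2.

Lemma g_nonneg y : 0 <= y -> g p y = Rpower (y + 1) (p - 1) - 1.
Proof.
  intros Hy. unfold g, sgn. rewrite Rabs_right by lra.
  destruct (Rlt_dec 0 y); [lra |].
  replace y with 0 by lra.
  destruct (Rlt_dec 0 0); [lra |].
  rewrite Rplus_0_l, Rpower_base_1. lra.
Qed.

Lemma g_nonpos y : y <= 0 -> g p y = 1 - Rpower (- y + 1) (p - 1).
Proof.
  intros Hy. unfold g, sgn. rewrite Rabs_left1 by lra.
  destruct (Rlt_dec 0 y); [lra |].
  destruct (Rlt_dec y 0); [lra |].
  replace y with 0 by lra.
  rewrite Ropp_0, Rplus_0_l, Rpower_base_1. lra.
Qed.

Lemma profile_increment M x y : 0 <= y <= x -> x <= M ->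
  (p - 1) * Rpower (M + 1) (p - 2) * (x - y)
  <= Rpower (x + 1) (p - 1) - Rpower (y + 1) (p - 1).
Proof.
  intros Hyx HxM.
  pose proof (concave_Rpower_increment (p - 1) (x + 1) (y + 1)
                ltac:(lra) ltac:(lra)) as Hconc.
  replace (p - 1 - 1) with (p - 2) in Hconc by ring.
  replace (x + 1 - (y + 1)) with (x - y) in Hconc by ring.
  assert (Hslope : Rpower (M + 1) (p - 2) <= Rpower (x + 1) (p - 2))
    by (apply Rpower_antitone; lra).
  assert (Hlen : 0 <= (p - 1) * (x - y)) by (apply Rmult_le_pos; lra).
  nra.
Qed.

Lemma g_increment M a b : b <= a -> Rabs a <= M -> Rabs b <= M ->
  (p - 1) * Rpower (M + 1) (p - 2) * (a - b) <= g p a - g p b.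
Proof.
  intros Hba Ha Hb.
  destruct (Rle_dec 0 b) as [Hb0 | Hb0]; [| destruct (Rle_dec a 0) as [Ha0 | Ha0]].
  - rewrite Rabs_right in Ha by lra.
    rewrite (g_nonneg a), (g_nonneg b) by lra.
    pose proof (profile_increment M a b ltac:(lra) Ha). lra.
  - rewrite Rabs_left1 in Hb by lra.
    rewrite (g_nonpos a), (g_nonpos b) by lra.
    pose proof (profile_increment M (- b) (- a) ltac:(lra) Hb).
    replace (- b - - a) with (a - b) in * by ring. lra.
  - (* b < 0 < a: split the increment at 0 *)
    rewrite Rabs_right in Ha by lra. rewrite Rabs_left1 in Hb by lra.
    rewrite (g_nonneg a), (g_nonpos b) by lra.
    pose proof (profile_increment M a 0 ltac:(lra) Ha) as Hpos.
    pose proof (profile_increment M (- b) 0 ltac:(lra) Hb) as Hneg.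
    rewrite Rplus_0_l, Rpower_base_1 in Hpos, Hneg. lra.
Qed.

Lemma g_monotone_quadratic a b :
  (p - 1) * Rpower (Rmax (Rabs a) (Rabs b) + 1) (p - 2) * (a - b) ^ 2
  <= (a - b) * (g p a - g p b).
Proof.
  pose proof (Rmax_l (Rabs a) (Rabs b)). pose proof (Rmax_r (Rabs a) (Rabs b)).
  destruct (Rle_dec b a) as [Hba | Hab].
  - pose proof (g_increment (Rmax (Rabs a) (Rabs b)) a b Hba ltac:(lra) ltac:(lra)).
    nra.
  - pose proof (g_increment (Rmax (Rabs a) (Rabs b)) b a ltac:(lra) ltac:(lra) ltac:(lra)).
    nra.
Qed.

(* Step 2: G(d) <= d^2 (|d|+1)^(p-2).  With u = |d|+1, convexity gives
   G(d) <= (u-1)(u^(p-1) - 1), and u^(p-1) - 1 <= u^(p-2)(u-1) as u^(p-2) <= 1. *)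
Lemma G_upper d : G p d <= d ^ 2 * Rpower (Rabs d + 1) (p - 2).
Proof.
  unfold G. pose proof (Rabs_pos d).
  rewrite <- pow2_abs.
  set (u := Rabs d + 1).
  replace (Rabs d) with (u - 1) by (unfold u; ring).
  assert (Hu : 1 <= u) by (unfold u; lra).
  pose proof (convex_Rpower_increment p u 1 ltac:(lra) ltac:(lra)) as Hconv.
  rewrite Rpower_base_1 in Hconv.
  assert (Hsplit : Rpower u (p - 1) = Rpower u (p - 2) * u).
  { replace (p - 1) with (p - 2 + 1) by ring.
    rewrite Rpower_plus, Rpower_1 by lra. reflexivity. }
  assert (Hsmall : Rpower u (p - 2) <= 1).
  { rewrite <- (Rpower_base_1 (p - 2)). apply Rpower_antitone; lra. }
  assert (HG : / p * (Rpower u p - 1) <= Rpower u (p - 1) * (u - 1)).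
  { apply Rmult_le_reg_l with p; [lra |].
    rewrite <- Rmult_assoc, Rinv_r, Rmult_1_l, <- Rmult_assoc by lra. exact Hconv. }
  assert (Hfac : 0 <= (u - 1) * (1 - Rpower u (p - 2)))
    by (apply Rmult_le_pos; lra).
  rewrite Hsplit in HG. nra.
Qed.

End Profile.

Theorem mainTheorem16 (p : R) (hp : 1 < p < 2) :
  exists Cp : R, 0 < Cp /\
    forall (a b mu : R), 0 < mu < 1 ->
      Rabs (a - b) >= mu * Rmax (Rabs a) (Rabs b) ->
      G p (a - b) <= Cp / Rpower mu (2 - p) * ((a - b) * (g p a - g p b)).
Proof.
  exists (/ (p - 1)). split; [apply Rinv_0_lt_compat; lra |].
  intros a b mu Hmu Hsep.
  pose proof (g_monotone_quadratic p hp a b) as Hmono.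
  pose proof (G_upper p hp (a - b)) as HG.
  set (M := Rmax (Rabs a) (Rabs b)) in *.
  set (d := a - b) in *.
  assert (HM : 0 <= M).
  { pose proof (Rabs_pos a). pose proof (Rmax_l (Rabs a) (Rabs b)). unfold M; lra. }
  pose proof (Rabs_pos d).
  (* Step 3: the separation hypothesis transfers the weight to M. *)
  pose proof (Rpower_rescale (p - 2) mu (Rabs d + 1) (M + 1)
                ltac:(lra) ltac:(lra) ltac:(lra) ltac:(nra)) as Hres.
  replace (- (p - 2)) with (2 - p) in Hres by ring.
  set (m := Rpower mu (2 - p)) in *.
  set (w := Rpower (Rabs d + 1) (p - 2)) in *.
  set (K := Rpower (M + 1) (p - 2)) in *.
  assert (Hm : 0 < m) by apply exp_pos.
  assert (Hweight : (p - 1) * (m * w) * d ^ 2 <= d * (g p a - g p b)).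
  { apply Rle_trans with ((p - 1) * K * d ^ 2); [| exact Hmono].
    apply Rmult_le_compat_r; [nra |]. apply Rmult_le_compat_l; lra. }
  apply Rle_trans with (d ^ 2 * w); [exact HG |].
  replace (d ^ 2 * w) with (/ (p - 1) / m * ((p - 1) * (m * w) * d ^ 2))
    by (field; lra).
  apply Rmult_le_compat_l; [| exact Hweight].
  unfold Rdiv. apply Rmult_le_pos; left; apply Rinv_0_lt_compat; lra.
Qed.
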